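(* Let $S$ be a measurement scenario, $n\ge1$, and $F\colon\mathrm{Emp}(S)\to\mathrm{Emp}(\mathbf n)$ a function preserving convex combinations. Identify $\mathrm{Emp}(\mathbf n)$ with the set of probability distributions on $\{0,\dots,n-1\}$. Then $F$ is induced by a probabilistic procedure $S\to\mathbf n$ (i.e. $F=\mathrm{Emp}(f)$ for some probabilistic procedure $f$) if and only if there exist reals $r_1,\dots,r_m>0$ with $\sum_jr_j=1$ and functions $F_j\colon\mathcal E_S(X_S)\to\{0,\dots,n-1\}$ such that $F(\delta_s)=\sum_jr_j\delta_{F_j(s)}$ for all $s\in\mathcal E_S(X_S)$ and, for each $j$, the least subset $U_j\subseteq X_S$ such that $F_j$ factors through $\mathcal E_S(U_j)$ belongs to $\Sigma_S$.
   Context: A simplicial complex $\Sigma$ on a finite set $X$ is a family of subsets containing $\emptyset$ and all singletons, closed under subsets. A measurement scenario $S=(X_S,O_S,\Sigma_S)$: finite set $X_S$, finite non-empty outcome sets $O_{S,x}$, simplicial complex $\Sigma_S$ of contexts. $\mathcal E_S(U)=\prod_{x\in U}O_{S,x}$, restriction $s|_V$. An empirical model on $S$ is a family $(e_\sigma)_{\sigma\in\Sigma_S}$ of probability distributions on $\mathcal E_S(\sigma)$ with $e_\tau$ the marginal of $e_\sigma$ whenever $\tau\subseteq\sigma$; $\mathrm{Emp}(S)$ is the convex set of these; $\delta_s$ ($s\in\mathcal E_S(X_S)$) is the model with $(\delta_s)_\sigma$ the point mass at $s|_\sigma$. $\mathbf n$ is the scenario with one measurement $*$ and outcomes $\{0,\dots,n-1\}$;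 $\delta_k$ is the point mass at $k$. $F_j$ factors through $\mathcal E_S(U)$ if $F_j(s)=\tilde F(s|_U)$ for some $\tilde F$ and all $s$ (a least such $U$ always exists). A simplicial relation from $\Sigma$ (on $X$) to $\Delta$ (on $Y$) is a relation $R\subseteq X\times Y$ with $R(\sigma)\in\Delta$ for all $\sigma\in\Sigma$. A deterministic procedure $f\colon S\to T$ is a pair $(\pi_f,\alpha_f)$ with $\pi_f$ a simplicial relation from $\Sigma_T$ to $\Sigma_S$ and $\alpha_{f,x}\colon\mathcal E_S(\pi_f(x))\to O_{T,x}$; it acts by $(\mathrm{Emp}(f)e)_\sigma=(\alpha_{f,\sigma})_*(e_{\pi_f(\sigma)})$ with $\alpha_{f,\sigma}(s)=(\alpha_{f,x}(s|_{\pi_f(x)}))_{x\in\sigma}$. A probabilistic procedure is a finitely supported probability distribution $\sum_ir_if_i$ on deterministic procedures, acting by $\mathrm{Emp}(\sum r_if_i)e=\sum r_i\mathrm{Emp}(f_i)e$. *)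

From HB Require Import structures.
From mathcomp Require Import all_boot all_order all_algebra.
From mathcomp Require Import reals.
Set Implicit Arguments.
Unset Strict Implicit.
Unset Printing Implicit Defensive.
Import Order.TTheory GRing.Theory Num.Theory.
Local Open Scope ring_scope.

Record scenario := Scenario {
  sc_X : finType;
  sc_O : sc_X -> finType;
  sc_Sigma : {set {set sc_X}};
  sc_O_nonempty : forall x, (0 < #|sc_O x|)%N;
  sc_Sigma0 : set0 \in sc_Sigma;
  sc_Sigma1 : forall x, [set x] \in sc_Sigma;
  sc_Sigma_sub : forall s t : {set sc_X}, s \in sc_Sigma -> t \subset s -> t \in sc_Sigma
}.

(* Partial sections: an element of E_S(U) is represented as a dependent
   finite function that is [Some _] exactly on U and [None] elsewhere. *)
Definition sec (S : scenario) := {dffun forall x : sc_X S, option (sc_O x)}.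

Definition dom (S : scenario) (s : sec S) : {set sc_X S} :=
  [set x | s x != None].

Definition restr (S : scenario) (V : {set sc_X S}) (s : sec S) : sec S :=
  [ffun x => if x \in V then s x else None].

Definition global (S : scenario) (s : sec S) : bool := dom s == setT.

Notation model R S := {ffun {set sc_X S} -> {ffun sec S -> R}}.

Definition mconv (R : realType) (S : scenario) (a : R) (e1 e2 : model R S)
  : model R S :=
  [ffun sigma => [ffun t => a * e1 sigma t + (1 - a) * e2 sigma t]].

Definition is_emp (R : realType) (S : scenario) (e : model R S) : Prop :=
  [/\ forall sigma, sigma \notin sc_Sigma S -> e sigma = 0,
      forall sigma s, sigma \in sc_Sigma S -> 0 <= e sigma s,
      forall sigma s, sigma \in sc_Sigma S -> dom s != sigma -> e sigma s = 0,
      forall sigma, sigma \in sc_Sigma S -> \sum_s e sigma s = 1 &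
      forall (sigma tau : {set sc_X S}) (t : sec S), sigma \in sc_Sigma S ->
        tau \subset sigma ->
        e tau t = \sum_(s | restr tau s == t) e sigma s].

Definition delta (R : realType) (S : scenario) (s : sec S) : model R S :=
  [ffun sigma => [ffun t =>
     if sigma \in sc_Sigma S then (restr sigma s == t)%:R else 0]].

(* The simplicial relation pi_f from
   Sigma_T to Sigma_S is given as its relational image of points,
   pi x = pi_f({x}); alpha x is alpha_{f,x}, only ever applied to sections
   with domain pi x. *)
Record dproc (S T : scenario) := DProc {
  dp_pi : sc_X T -> {set sc_X S};
  dp_alpha : forall x : sc_X T, sec S -> sc_O x
}.

Definition dp_piset (S T : scenario) (f : dproc S T) (sigma : {set sc_X T})
  : {set sc_X S} := \bigcup_(x in sigma) dp_pi f x.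

Definition is_dproc (S T : scenario) (f : dproc S T) : Prop :=
  forall sigma, sigma \in sc_Sigma T -> dp_piset f sigma \in sc_Sigma S.

Definition dp_apply (S T : scenario) (f : dproc S T) (sigma : {set sc_X T})
  (s : sec S) : sec T :=
  [ffun x => if x \in sigma then Some (dp_alpha f x (restr (dp_pi f x) s))
             else None].

Definition emp_det (R : realType) (S T : scenario) (f : dproc S T)
  (e : model R S) : model R T :=
  [ffun sigma => [ffun t =>
     if sigma \in sc_Sigma T then
       \sum_(s | dp_apply f sigma s == t) e (dp_piset f sigma) s
     else 0]].

Definition is_pproc (R : realType) (S T : scenario) (m : nat)
  (r : 'I_m -> R) (f : 'I_m -> dproc S T) : Prop :=
  [/\ forall i, 0 <= r i, \sum_i r i = 1 & forall i, is_dproc (f i)].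

Definition emp_prob (R : realType) (S T : scenario) (m : nat)
  (r : 'I_m -> R) (f : 'I_m -> dproc S T) (e : model R S) : model R T :=
  [ffun sigma => [ffun t => \sum_i r i * emp_det (f i) e sigma t]].

Section ScN.
Variable n : nat.
Hypothesis hn : (0 < n)%N.
Definition scn_O (n : nat) : unit -> finType := fun _ => 'I_n.
Lemma scn_O_nonempty : forall x : unit, (0 < #|scn_O n x|)%N.
Proof. by move=> x; rewrite /scn_O card_ord hn. Qed.
Lemma scn_Sigma0 : set0 \in [set: {set unit}].
Proof. by rewrite inE. Qed.
Lemma scn_Sigma1 : forall x : unit, [set x] \in [set: {set unit}].
Proof. by move=> x; rewrite inE. Qed.
Lemma scn_Sigma_sub : forall s t : {set unit},
  s \in [set: {set unit}] -> t \subset s -> t \in [set: {set unit}].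
Proof. by move=> s t _ _; rewrite inE. Qed.
Definition scn : scenario :=
  @Scenario unit (scn_O n) [set: {set unit}] scn_O_nonempty scn_Sigma0
    scn_Sigma1 scn_Sigma_sub.
End ScN.

Definition scn_sec (n : nat) (hn : (0 < n)%N) (k : 'I_n) : sec (scn hn) :=
  [ffun x : unit => Some (k : scn_O n x)].

Definition emp_to_dist (R : realType) (n : nat) (hn : (0 < n)%N)
  (e : model R (scn hn)) : {ffun 'I_n -> R} :=
  [ffun k => e [set tt] (scn_sec hn k)].

Definition factors_through (S : scenario) (A : Type) (G : sec S -> A)
  (U : {set sc_X S}) : Prop :=
  forall s s', global s -> global s' -> restr U s = restr U s' -> G s = G s'.

Definition least_factor_set (S : scenario) (A : Type) (G : sec S -> A)
  (U : {set sc_X S}) : Prop :=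
  factors_through G U /\ forall V, factors_through G V -> U \subset V.

Definition is_dist (R : realType) (n : nat) (p : {ffun 'I_n -> R}) : Prop :=
  (forall k, 0 <= p k) /\ \sum_k p k = 1.

From HB Require Import structures.
From mathcomp Require Import all_boot all_order all_algebra.
From mathcomp Require Import reals.
From mathcomp Require Import ring lra.
From Stdlib Require Import Classical.
Import Order.TTheory GRing.Theory Num.Theory.
Local Open Scope ring_scope.
Set Implicit Arguments.
Unset Strict Implicit.
Unset Printing Implicit Defensive.

(* A deterministic procedure into [scn hn] sends a global section [s] to
   [dp_alpha g tt (restr (dp_pi g tt) s)], a function of the restriction of [s]
   to a single context; evaluating a probabilistic procedure at the point
   masses [delta R s] gives the decomposition of [F], and every such function
   has a least factorisation set contained in that context.

   Conversely, every empirical model [e] is an affine combination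
   [\sum_s w s * delta R s] of point masses with a signed weight [w] (its
   marginals are matched context by context, by induction on the size of the
   contexts).  A map preserving convex combinations preserves such affine
   combinations too, since [w] can be written as [(p - (1 - b) q) / b] for
   probabilities [p], [q]; hence [F] is determined by the [F (delta R s)],
   and these are also the values of the procedure whose components read off
   [F_j] on the least factorisation sets. *)

Section PartialSections.
Variable S : scenario.
Implicit Types (s t u o : sec S) (U V sigma tau : {set sc_X S}).

Definition glue V u o : sec S := [ffun x => if x \in V then u x else o x].

Lemma restrE V s x : restr V s x = if x \in V then s x else None.
Proof. by rewrite ffunE. Qed.

Lemma glueE V u o x : glue V u o x = if x \in V then u x else o x.
Proof. by rewrite ffunE. Qed.

Lemma globalP s : reflect (forall x, s x != None) (global s).
Proof.
apply: (iffP eqP) => [dom_s x|def_s]; last by apply/setP => x; rewrite !inE def_s.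
by have := in_setT x; rewrite -dom_s inE.
Qed.

Lemma restr_eqP V s t : reflect {in V, forall x, s x = t x} (restr V s == restr V t).
Proof.
apply: (iffP eqP) => [eq_st x xV|eq_st].
  by have := congr1 (fun f : sec S => f x) eq_st; rewrite !restrE xV.
by apply/ffunP => x; rewrite !restrE; case: ifP => // /eq_st.
Qed.

Lemma dom_restr V s : global s -> dom (restr V s) = V.
Proof.
move/globalP=> def_s; apply/setP => x; rewrite inE restrE.
by case: (x \in V); rewrite ?def_s.
Qed.

Lemma dom_restrI V s : dom (restr V s) = V :&: dom s.
Proof. by apply/setP => x; rewrite !inE restrE; case: (x \in V). Qed.

Lemma restr_dom s : restr (dom s) s = s.
Proof. by apply/ffunP => x; rewrite restrE inE; case: eqP => [->|]. Qed.

Lemma restr_restr U V s : U \subset V -> restr U (restr V s) = restr U s.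
Proof. by move=> /subsetP sUV; apply/ffunP => x; rewrite !restrE; case: ifP => // /sUV ->. Qed.

Lemma restr_id V s : restr V (restr V s) = restr V s.
Proof. exact: restr_restr. Qed.

Lemma glue_global V u o : V \subset dom u -> global o -> global (glue V u o).
Proof.
move=> /subsetP V_dom_u /globalP def_o; apply/globalP => x; rewrite glueE.
by case: ifP => // /V_dom_u; rewrite inE.
Qed.

Lemma restr_glue V u o : restr V (glue V u o) = restr V u.
Proof. by apply/eqP/restr_eqP => x xV; rewrite glueE xV. Qed.

Lemma restr_glue_eq sigma tau u o t : dom t = tau ->
  (restr tau (glue sigma u o) == t) =
  (restr (sigma :&: tau) u == restr (sigma :&: tau) t) &&
  (restr (tau :\: sigma) o == restr (tau :\: sigma) t).
Proof.
move=> dom_t; rewrite -{1}(restr_dom t) dom_t.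
apply/restr_eqP/andP => [eq_gt|[/restr_eqP eq_ut /restr_eqP eq_ot] x xtau].
  by split; apply/restr_eqP => x; rewrite !inE => /andP[xs xt];
    rewrite -eq_gt // glueE ?xs ?(negbTE xs).
by rewrite glueE; case: ifP => xs; [apply: eq_ut | apply: eq_ot]; rewrite !inE xs.
Qed.

Definition default_sec : sec S := [ffun x => [pick o : sc_O x]].

Lemma default_sec_global : global default_sec.
Proof.
apply/globalP => x; rewrite ffunE; case: pickP => // no_o.
by have := sc_O_nonempty x; rewrite (eq_card0 no_o).
Qed.

End PartialSections.

Lemma sumr_pred1 (R : pzRingType) (T : finType) (P : pred T) (a : T) :
  \sum_(u | P u) ((u == a)%:R : R) = (P a)%:R.
Proof.
rewrite big_mkcond (bigD1 a) //= eqxx big1 ?addr0; first by case: (P a).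
by move=> u /negbTE ->; case: (P u).
Qed.

Lemma sumr_indicator (R : pzRingType) (T : finType) (P : pred T) (f : T -> R) :
  \sum_u f u * (P u)%:R = \sum_(u | P u) f u.
Proof. by rewrite [RHS]big_mkcond; apply: eq_bigr => u _; case: (P u); rewrite ?mulr1 ?mulr0. Qed.

Lemma sum_mix (R : comPzRingType) (T : finType) a b (p q X : T -> R) :
  \sum_s (a * p s + b * q s) * X s = a * \sum_s p s * X s + b * \sum_s q s * X s.
Proof. by rewrite !big_distrr -big_split; apply: eq_bigr => s _ /=; ring. Qed.

Lemma sum_point (R : pzRingType) (T : finType) (s0 : T) (X : T -> R) :
  \sum_s (s == s0)%:R * X s = X s0.
Proof.
rewrite (bigD1 s0) //= eqxx mul1r big1 ?addr0 // => s /negbTE ->.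
by rewrite mul0r.
Qed.

Lemma sumr_enum_support (R : nmodType) (T : finType) (P : pred T) (F : T -> R) :
  (forall i, ~~ P i -> F i = 0) -> \sum_i F i = \sum_(j < #|P|) F (enum_val j).
Proof.
move=> F_supp; rewrite -big_enum_val [RHS]big_mkcond; apply: eq_bigr => i _.
by case: ifP => // /negbT /F_supp.
Qed.

Section Marginals.
Variables (R : realType) (S : scenario).
Implicit Types (w : sec S -> R) (s t u : sec S) (rho sigma tau : {set sc_X S}).

Definition marg w sigma t : R := \sum_(s | global s && (restr sigma s == t)) w s.

Lemma marg_dom w sigma t : dom t != sigma -> marg w sigma t = 0.
Proof.
move=> dom_t; rewrite /marg big1 // => s /andP[gs /eqP rs].
by rewrite -rs dom_restr ?eqxx in dom_t.
Qed.

Lemma marg_marg w rho sigma t : rho \subset sigma ->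
  \sum_(u | restr rho u == t) marg w sigma u = marg w rho t.
Proof.
move=> rho_sigma; rewrite [RHS](partition_big (restr sigma) (fun u => restr rho u == t)).
  apply: eq_bigr => u /eqP <-; apply: eq_bigl => s.
  by case: eqP => [<-|]; rewrite ?andbF // restr_restr ?eqxx ?andbT.
by move=> s /andP[_ /eqP <-]; rewrite restr_restr.
Qed.

(* Having matched [e] on all contexts of size < k, the weights are corrected,
   for each context [sigma] of size k, by the defect of [sigma] placed on the
   global sections that agree with a fixed one outside [sigma].  This
   correction is invisible on every other context [tau] of size <= k: its
   marginal there only sees the defect of the smaller context [sigma :&: tau],
   which vanishes by compatibility of [e]. *)
Section SignedDecomposition.
Variable e : model R S.
Hypothesis e_emp : is_emp e.

Definition defect w sigma u := e sigma u - marg w sigma u.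

Lemma defect_dom w sigma u : sigma \in sc_Sigma S -> dom u != sigma -> defect w sigma u = 0.
Proof. by case: e_emp => _ _ e_dom _ _ sS dom_u; rewrite /defect e_dom ?marg_dom ?subrr. Qed.

Lemma sum_defect w rho sigma t : sigma \in sc_Sigma S -> rho \subset sigma ->
  \sum_(u | restr rho u == t) defect w sigma u = defect w rho t.
Proof. by case: e_emp => _ _ _ _ e_marg sS rho_sigma; rewrite sumrB -e_marg ?marg_marg. Qed.

Definition correction w sigma s : R :=
  \sum_u defect w sigma u * (s == glue sigma u (default_sec S))%:R.

Lemma marg_correction_glue w sigma tau t : sigma \in sc_Sigma S ->
  marg (correction w sigma) tau t =
  \sum_u defect w sigma u * (restr tau (glue sigma u (default_sec S)) == t)%:R.
Proof.
move=> sS; rewrite /marg /correction exchange_big /=; apply: eq_bigr => u _.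
rewrite -big_distrr sumr_pred1 /=.
have [dom_u|/(defect_dom w) -> //] := eqVneq (dom u) sigma; last by rewrite !mul0r.
by rewrite glue_global ?default_sec_global ?dom_u.
Qed.

Lemma marg_correction w sigma tau t :
  sigma \in sc_Sigma S -> dom t = tau -> (#|tau| <= #|sigma|)%N ->
  (forall rho t', rho \in sc_Sigma S -> (#|rho| < #|sigma|)%N -> dom t' = rho ->
     e rho t' = marg w rho t') ->
  marg (correction w sigma) tau t = (sigma == tau)%:R * defect w tau t.
Proof.
move=> sS dom_t le_tau_sigma below_sigma; rewrite marg_correction_glue //.
have [<-|ne_sigma_tau] := eqVneq sigma tau.
  under eq_bigr => u _ do rewrite restr_glue.
  by rewrite sumr_indicator sum_defect ?mul1r.
under eq_bigr => u _ do rewrite restr_glue_eq // -mulnb natrM mulrA.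
rewrite -big_distrl /= sumr_indicator sum_defect ?subsetIl //= mul0r.
set rho := sigma :&: tau.
suff -> : defect w rho (restr rho t) = 0 by rewrite mul0r.
apply/eqP; rewrite subr_eq0; apply/eqP/below_sigma.
- exact: sc_Sigma_sub sS (subsetIl _ _).
- apply: proper_card; rewrite properEneq subsetIl andbT.
  apply: contra ne_sigma_tau => /eqP rho_sigma.
  by rewrite eqEcard le_tau_sigma andbT -rho_sigma subsetIr.
- by rewrite dom_restrI dom_t; apply/setIidPl/subsetIr.
Qed.

Lemma emp_marg_below k : exists w, forall sigma t, sigma \in sc_Sigma S ->
  (#|sigma| < k)%N -> dom t = sigma -> e sigma t = marg w sigma t.
Proof.
elim: k => [|k [w below_k]]; first by exists (fun=> 0) => sigma t _; rewrite ltn0.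
pose C := [pred sigma | (sigma \in sc_Sigma S) && (#|sigma| == k)].
exists (fun s => w s + \sum_(sigma in C) correction w sigma s).
move=> tau t tS; rewrite ltnS => le_tau_k dom_t.
rewrite /marg big_split /= exchange_big /= -/(marg w tau t).
under eq_bigr => sigma /andP[sS /eqP card_sigma] do
  rewrite -/(marg (correction w sigma) tau t) marg_correction ?card_sigma //.
move: le_tau_k; rewrite leq_eqVlt => /orP[/eqP card_tau|lt_tau_k].
  have tC : tau \in C by rewrite inE tS card_tau eqxx.
  rewrite (bigD1 tau) //= eqxx mul1r big1 => [|sigma /andP[_ /negbTE ->]]; last by rewrite mul0r.
  by rewrite addr0 /defect addrC subrK.
rewrite big1 ?addr0 ?below_k // => sigma /andP[_ /eqP card_sigma].
by case: eqP lt_tau_k => [<-|]; rewrite ?card_sigma ?ltnn ?mul0r.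
Qed.

Lemma emp_marg : exists w, forall sigma t, sigma \in sc_Sigma S ->
  dom t = sigma -> e sigma t = marg w sigma t.
Proof.
have [w below] := emp_marg_below (#|sc_X S|).+1.
by exists w => sigma t sS; apply: below; rewrite // ltnS max_card.
Qed.

End SignedDecomposition.
End Marginals.

Section Combinations.
Variables (R : realType) (S : scenario).
Implicit Types (f p q w : sec S -> R) (s t : sec S) (sigma tau : {set sc_X S}).

Definition comb w : model R S :=
  [ffun sigma => [ffun t => \sum_s w s * delta R s sigma t]].

Lemma deltaE s sigma t :
  delta R s sigma t = if sigma \in sc_Sigma S then (restr sigma s == t)%:R else 0.
Proof. by rewrite !ffunE. Qed.

Lemma combE w sigma t : comb w sigma t = \sum_s w s * delta R s sigma t.
Proof. by rewrite !ffunE. Qed.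

Lemma comb_Sigma w sigma t : sigma \in sc_Sigma S ->
  comb w sigma t = \sum_(s | restr sigma s == t) w s.
Proof. by move=> sS; rewrite combE; under eq_bigr do rewrite deltaE sS; rewrite sumr_indicator. Qed.

Lemma eq_comb p q : p =1 q -> comb p = comb q.
Proof.
move=> eq_pq; apply/ffunP => sigma; apply/ffunP => t.
by rewrite !combE; under eq_bigr do rewrite eq_pq.
Qed.

Lemma comb_mconv a p q :
  mconv a (comb p) (comb q) = comb (fun s => a * p s + (1 - a) * q s).
Proof.
apply/ffunP => sigma; apply/ffunP => t; rewrite !ffunE !big_distrr -big_split /=.
by apply: eq_bigr => s _; ring.
Qed.

Lemma delta_comb s0 : delta R s0 = comb (fun s => (s == s0)%:R).
Proof.
apply/ffunP => sigma; apply/ffunP => t; rewrite combE (bigD1 s0) //= eqxx mul1r.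
by rewrite big1 ?addr0 // => s /negbTE ->; rewrite mul0r.
Qed.

Lemma sum_comb w sigma : sigma \in sc_Sigma S -> \sum_t comb w sigma t = \sum_s w s.
Proof.
move=> sS; under eq_bigr do rewrite comb_Sigma //.
by rewrite [RHS](partition_big (restr sigma) predT).
Qed.

Definition global_dist p :=
  [/\ forall s, 0 <= p s, forall s, ~~ global s -> p s = 0 & \sum_s p s = 1].

Lemma comb_emp p : global_dist p -> is_emp (comb p).
Proof.
case=> p_ge0 p_global p_sum1; split.
- move=> sigma sS; apply/ffunP => t; rewrite combE ffunE big1 // => s _.
  by rewrite deltaE (negbTE sS) mulr0.
- by move=> sigma t sS; rewrite comb_Sigma // sumr_ge0.
- move=> sigma t sS dom_t; rewrite comb_Sigma // big1 // => s /eqP rs.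
  by apply: p_global; apply: contra dom_t => gs; rewrite -rs dom_restr.
- by move=> sigma sS; rewrite sum_comb.
- move=> sigma tau t sS tau_sigma.
  rewrite comb_Sigma ?(sc_Sigma_sub sS tau_sigma) //.
  under [RHS]eq_bigr do rewrite comb_Sigma //.
  rewrite [LHS](partition_big (restr sigma) (fun u => restr tau u == t)) => [|s /eqP <-].
    apply: eq_bigr => u /eqP <-; apply: eq_bigl => s.
    by case: (eqVneq (restr sigma s) u) => [<-|]; rewrite ?andbF ?andbT // restr_restr ?eqxx.
  by rewrite restr_restr.
Qed.

Lemma delta_emp s0 : global s0 -> is_emp (delta R s0).
Proof.
move=> gs0; rewrite delta_comb; apply: comb_emp; split.
- by move=> s; case: eqP.
- by move=> s; case: eqP => // ->; rewrite gs0.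
- by rewrite sumr_pred1.
Qed.

Lemma global_dist_scale f : (forall s, 0 <= f s) -> (forall s, ~~ global s -> f s = 0) ->
  0 < \sum_s f s -> global_dist (fun s => f s / \sum_s f s).
Proof.
move=> f_ge0 f_global f_sum_gt0; split => [s|s /f_global ->|]; first exact: divr_ge0 (ltW _).
  by rewrite mul0r.
by rewrite -mulr_suml divff // gt_eqF.
Qed.

Lemma eq_global_dist p q : p =1 q -> global_dist p -> global_dist q.
Proof.
move=> eq_pq [p_ge0 p_global p_sum1]; split=> [s|s /p_global|]; rewrite -?eq_pq //.
by rewrite -p_sum1; apply: eq_bigr => s _; rewrite eq_pq.
Qed.

Lemma global_dist_le1 p s0 : global_dist p -> p s0 <= 1.
Proof. by case=> p_ge0 _ <-; rewrite (bigD1 s0) //= lerDl sumr_ge0. Qed.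

Definition drop_weight p s0 s := if s == s0 then 0 else p s / (1 - p s0).

Lemma drop_weightE p s0 s : p s0 != 1 ->
  p s = p s0 * (s == s0)%:R + (1 - p s0) * drop_weight p s0 s.
Proof.
rewrite /drop_weight => p_s0_neq1; have [->|_] := eqVneq s s0; first by rewrite mulr1 mulr0 addr0.
by rewrite mulr0 add0r mulrCA divff ?mulr1 // subr_eq0 eq_sym.
Qed.

Lemma global_dist_drop p s0 : global_dist p -> p s0 != 1 -> global_dist (drop_weight p s0).
Proof.
move=> p_dist p_s0_neq1; have [p_ge0 p_global p_sum1] := p_dist.
have lt_p_s0_1 : 0 < 1 - p s0 by rewrite subr_gt0 lt_neqAle p_s0_neq1 global_dist_le1.
split=> [s|s /p_global p_s|].
- by rewrite /drop_weight; case: eqP => // _; rewrite divr_ge0 // ltW.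
- by rewrite /drop_weight p_s mul0r; case: eqP.
move: p_sum1; rewrite (eq_bigr _ (fun s _ => drop_weightE s p_s0_neq1)) big_split /=.
rewrite -!big_distrr /= sumr_pred1 mulr1 => sum_mixed.
apply: (mulfI (lt0r_neq0 lt_p_s0_1)); apply: (addrI (p s0)).
by rewrite sum_mixed mulr1 addrC subrK.
Qed.

Lemma global_dist_point p s0 : global_dist p -> p s0 = 1 -> p =1 (fun s => (s == s0)%:R).
Proof.
case=> p_ge0 _ p_sum1 p_s0_1 s; have [->|ne_s_s0] := eqVneq s s0; first by rewrite p_s0_1.
move: p_sum1; rewrite (bigD1 s0) //= p_s0_1 -{2}[1]addr0 => /addrI /eqP.
by rewrite psumr_eq0 // => /allP/(_ s (mem_index_enum s)); rewrite ne_s_s0 => /eqP.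
Qed.

Lemma global_dist_support p : global_dist p -> exists2 s0, global s0 & p s0 != 0.
Proof.
case=> _ p_global p_sum1; case: (pickP [pred s | p s != 0]) => [s0 /= p_s0|p0].
  by exists s0 => //; apply: contraNT p_s0 => /p_global ->.
by move: p_sum1; rewrite big1 => [/eqP|s _]; [rewrite eq_sym oner_eq0 | apply/eqP/negbFE/p0].
Qed.

Lemma support_drop p s0 :
  [set s | drop_weight p s0 s != 0] \subset [set s | p s != 0] :\ s0.
Proof.
apply/subsetP => s; rewrite !inE /drop_weight.
case: (eqVneq s s0) => _ /=; first by rewrite eqxx.
by apply: contraNN => /eqP ->; rewrite mul0r.
Qed.

Lemma emp_comb e : is_emp e ->
  exists w, [/\ forall s, ~~ global s -> w s = 0, \sum_s w s = 1 & e = comb w].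
Proof.
move=> e_emp; have [w e_marg] := emp_marg e_emp.
pose w' s := if global s then w s else 0.
have e_comb : e = comb w'.
  apply/ffunP => sigma; apply/ffunP => t; case: e_emp => e_Sigma _ e_dom _ _.
  have [sS|sNS] := boolP (sigma \in sc_Sigma S); last first.
    rewrite e_Sigma // ffunE combE big1 // => s _.
    by rewrite deltaE (negbTE sNS) mulr0.
  rewrite comb_Sigma //; have [dom_t|dom_t] := eqVneq (dom t) sigma.
    by rewrite e_marg // /marg big_mkcondl.
  rewrite e_dom // big1 // => s /eqP rs; rewrite /w'; case: ifP => // gs.
  by rewrite -rs dom_restr ?eqxx in dom_t.
exists w'; split => //; first by move=> s /negbTE gs; rewrite /w' gs.
case: e_emp => _ _ _ e_sum1 _.
by rewrite -(sum_comb w' (sc_Sigma0 S)) -e_comb e_sum1 ?sc_Sigma0.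
Qed.

End Combinations.

Section ConvexMaps.
Variables (R : realType) (S : scenario) (K : finType).
Variable F : model R S -> {ffun K -> R}.
Hypothesis F_mconv : forall (e1 e2 : model R S) (a : R),
  is_emp e1 -> is_emp e2 -> 0 <= a -> a <= 1 ->
  F (mconv a e1 e2) = [ffun k => a * F e1 k + (1 - a) * F e2 k].
Implicit Types (p q w : sec S -> R) (s : sec S).

(* By induction on the size of the support, peeling off one point mass. *)
Lemma F_comb p : global_dist p -> F (comb p) = [ffun k => \sum_s p s * F (delta R s) k].
Proof.
move: {2}#|[set s | p s != 0]| (leqnn #|[set s | p s != 0]|) => N.
elim: N p => [|N IH] p supp_p p_dist; have [s0 gs0 p_s0] := global_dist_support p_dist.
  by move: supp_p; rewrite leqn0 cards_eq0 => /eqP/setP/(_ s0); rewrite !inE p_s0.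
have [p_s0_1|p_s0_neq1] := eqVneq (p s0) 1.
  have p_point := global_dist_point p_dist p_s0_1.
  rewrite (eq_comb p_point) -delta_comb; apply/ffunP => k; rewrite ffunE.
  by under eq_bigr do rewrite p_point; rewrite sum_point.
have supp_d : (#|[set s | drop_weight p s0 s != 0%R]| <= N)%N.
  apply: leq_trans (subset_leq_card (support_drop p s0)) _.
  by move: supp_p; rewrite (cardsD1 s0) inE p_s0.
have d_dist := global_dist_drop p_dist p_s0_neq1.
have d_emp := comb_emp d_dist; have delta_s0_emp := delta_emp R gs0.
have [p_ge0 _ _] := p_dist; have p_s0_ge0 := p_ge0 s0.
rewrite (eq_comb (fun s => drop_weightE s p_s0_neq1)) -comb_mconv -delta_comb.
rewrite F_mconv ?global_dist_le1 // IH //; apply/ffunP => k; rewrite !ffunE.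
by under [RHS]eq_bigr do rewrite (drop_weightE _ p_s0_neq1); rewrite sum_mix sum_point.
Qed.

Lemma F_comb_mix w q b : global_dist q -> 0 < b -> b <= 1 -> is_emp (comb w) ->
  global_dist (fun s => b * w s + (1 - b) * q s) ->
  F (comb w) = [ffun k => \sum_s w s * F (delta R s) k].
Proof.
move=> q_dist b_gt0 b_le1 w_emp mix_dist.
have := F_mconv w_emp (comb_emp q_dist) (ltW b_gt0) b_le1.
rewrite comb_mconv (F_comb mix_dist) (F_comb q_dist) => /ffunP F_mix; apply/ffunP => k.
by have := F_mix k; rewrite !ffunE sum_mix => /addIr /(mulfI (lt0r_neq0 b_gt0)).
Qed.

(* With [A = \sum_s |w s|] and [b = 1 / (A + 1)], the normalisations of
   [p = |w| + delta_o] and [q = |w| - w + delta_o] satisfy [p = b w + (1 - b) q];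
   the point mass at [o] keeps [q] normalisable even when [w >= 0]. *)
Lemma F_affine w : (forall s, ~~ global s -> w s = 0) -> \sum_s w s = 1 ->
  is_emp (comb w) -> F (comb w) = [ffun k => \sum_s w s * F (delta R s) k].
Proof.
move=> w_global w_sum1 w_emp; pose o := default_sec S.
pose A := \sum_s `|w s|.
have A_ge1 : 1 <= A by rewrite -w_sum1 (le_trans (ler_norm _)) ?ler_norm_sum.
have A_gt0 : 0 < A := lt_le_trans ltr01 A_ge1.
pose q s := `|w s| - w s + (s == o)%:R.
have q_sum : \sum_s q s = A.
  by rewrite !big_split /= sumrN w_sum1 sumr_pred1 subrK.
have q_dist : global_dist (fun s => q s / \sum_s q s).
  apply: global_dist_scale => [s|s gs|]; rewrite ?q_sum //.
    by rewrite addr_ge0 ?subr_ge0 ?ler_norm.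
  rewrite /q w_global // normr0 subr0 add0r; case: eqP => // s_o.
  by rewrite s_o default_sec_global in gs.
pose p s := `|w s| + (s == o)%:R.
have p_sum : \sum_s p s = A + 1 by rewrite big_split /= sumr_pred1.
apply: (F_comb_mix (b := (A + 1)^-1) q_dist) => //.
- by rewrite invr_gt0; lra.
- by rewrite invr_le1 ?unitfE; lra.
apply: (eq_global_dist (p := fun s => p s / \sum_s p s)).
  move=> s; rewrite p_sum q_sum /p /q; field; lra.
apply: global_dist_scale => [s|s gs|]; rewrite ?p_sum; [exact: addr_ge0 | | lra].
rewrite /p w_global // normr0 add0r; case: eqP => // s_o.
by rewrite s_o default_sec_global in gs.
Qed.

End ConvexMaps.

Section FactorSets.
Variables (S : scenario) (A : Type) (G : sec S -> A).

Lemma factors_throughI U V :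
  factors_through G U -> factors_through G V -> factors_through G (U :&: V).
Proof.
move=> G_U G_V s s' gs gs' /eqP/restr_eqP eq_UV.
have gg : global (glue U s s') by rewrite glue_global ?(eqP gs) ?subsetT.
transitivity (G (glue U s s')).
  by apply: G_U => //; rewrite restr_glue.
apply: G_V => //; apply/eqP/restr_eqP => x xV; rewrite glueE; case: ifP => // xU.
by apply: eq_UV; rewrite inE xU.
Qed.

Lemma least_factor_set_exists V :
  factors_through G V -> exists2 U, least_factor_set G U & U \subset V.
Proof.
move: {2}#|V| (leqnn #|V|) => N; elim: N V => [|N IH] V card_V G_V.
  exists V => //; split=> // W _.
  by move: card_V; rewrite leqn0 cards_eq0 => /eqP ->; apply: sub0set.
have [[W G_W not_VW]|least_V] :=
  classic (exists2 W, factors_through G W & ~~ (V \subset W)); last first.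
  exists V => //; split=> // W G_W; apply/negPn/negP => not_VW.
  by apply: least_V; exists W.
have [|U least_U UVW] := IH (V :&: W) _ (factors_throughI G_V G_W).
  rewrite -ltnS; apply: leq_trans card_V.
  by apply: proper_card; rewrite properIl.
by exists U => //; apply: subset_trans UVW (subsetIl _ _).
Qed.

End FactorSets.

Section ProceduresToN.
Variables (S : scenario) (n : nat) (hn : (0 < n)%N).
Implicit Types (g : dproc S (scn hn)) (s t : sec S).

Definition dp_out g s : 'I_n := dp_alpha g tt (restr (dp_pi g tt) s).

Lemma dp_pi_Sigma g : is_dproc g -> dp_pi g tt \in sc_Sigma S.
Proof. by move=> g_dproc; have := g_dproc [set tt]; rewrite /dp_piset big_set1 inE; apply. Qed.

Lemma dp_out_factors g : factors_through (dp_out g) (dp_pi g tt).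
Proof. by move=> s s' _ _ eq_ss'; rewrite /dp_out eq_ss'. Qed.

Lemma emp_det_comb (R : realType) g (w : sec S -> R) k : dp_pi g tt \in sc_Sigma S ->
  emp_det g (comb w) [set tt] (scn_sec hn k) = \sum_s w s * (dp_out g s == k)%:R.
Proof.
move=> pi_Sigma; have -> : emp_det g (comb w) [set tt] (scn_sec hn k) =
    \sum_(t | dp_out g t == k) comb w (dp_pi g tt) t.
  rewrite /emp_det ffunE ffunE inE /dp_piset big_set1; apply: eq_bigl => t.
  apply/eqP/eqP => [/ffunP/(_ tt)|<-]; first by rewrite !ffunE inE => -[].
  by apply/ffunP => -[]; rewrite !ffunE inE.
set pi := dp_pi g tt.
have dp_out_restr s : dp_out g (restr pi s) = dp_out g s by rewrite /dp_out restr_id.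
rewrite sumr_indicator [RHS](partition_big (restr pi) (fun t => dp_out g t == k)) => [|s];
  last by rewrite dp_out_restr.
apply: eq_bigr => t /eqP t_k; rewrite comb_Sigma //; apply: eq_bigl => s.
by case: (eqVneq (restr pi s) t) => [rst|]; rewrite ?andbF // -dp_out_restr rst t_k eqxx.
Qed.

Lemma emp_prob_comb (R : realType) m (r : 'I_m -> R) f (w : sec S -> R) :
  (forall i, is_dproc (f i)) ->
  emp_to_dist (emp_prob r f (comb w)) =
  [ffun k => \sum_s w s * \sum_i r i * (dp_out (f i) s == k)%:R].
Proof.
move=> f_dproc; apply/ffunP => k; rewrite /emp_to_dist /emp_prob ffunE ffunE ffunE ffunE.
under eq_bigr do rewrite emp_det_comb ?dp_pi_Sigma // big_distrr.
rewrite exchange_big; apply: eq_bigr => s _; rewrite big_distrr.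
by apply: eq_bigr => i _ /=; rewrite mulrCA.
Qed.

Definition factor_dproc (U : {set sc_X S}) (G : sec S -> 'I_n) : dproc S (scn hn) :=
  @DProc S (scn hn) (fun=> U) (fun x t => G (glue U t (default_sec S)) : sc_O x).

Lemma is_dproc_factor_dproc U G : U \in sc_Sigma S -> is_dproc (factor_dproc U G).
Proof. by move=> U_Sigma sigma _; apply: sc_Sigma_sub U_Sigma _; apply/bigcupsP. Qed.

Lemma dp_out_factor_dproc U G s : factors_through G U -> global s ->
  dp_out (factor_dproc U G) s = G s.
Proof.
move=> G_U gs; apply: G_U => //; last by rewrite restr_glue restr_id.
by rewrite glue_global ?dom_restr ?default_sec_global.
Qed.

End ProceduresToN.

Lemma pproc_point_masses (R : realType) (S : scenario) (n : nat) (hn : (0 < n)%N)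
    (F : model R S -> {ffun 'I_n -> R}) m (r : 'I_m -> R) (f : 'I_m -> dproc S (scn hn)) :
  is_pproc r f -> (forall e, is_emp e -> F e = emp_to_dist (emp_prob r f e)) ->
  exists (m' : nat) (r' : 'I_m' -> R) (G : 'I_m' -> sec S -> 'I_n),
    [/\ forall j, 0 < r' j, \sum_j r' j = 1,
        forall s, global s -> F (delta R s) = [ffun k => \sum_j r' j * (G j s == k)%:R] &
        forall j, exists U, least_factor_set (G j) U /\ U \in sc_Sigma S].
Proof.
case=> r_ge0 r_sum1 f_dproc F_f; pose P := [pred i | 0 < r i].
have r_supp (X : 'I_m -> R) i : ~~ P i -> r i * X i = 0.
  rewrite inE -leNgt => r_le0; suff -> : r i = 0 by rewrite mul0r.
  by apply/eqP; rewrite eq_le r_le0 r_ge0.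
exists #|P|, (r \o enum_val), (fun j => dp_out (f (enum_val j))); split=> /=.
- by move=> j; have := enum_valP j.
- by rewrite -r_sum1 (sumr_enum_support (P := P) (F := r)) // => i /(r_supp (fun=> 1));
    rewrite mulr1.
- move=> s gs; rewrite F_f; last exact: delta_emp.
  rewrite delta_comb emp_prob_comb //.
  by apply/ffunP => k; rewrite !ffunE sum_point (sumr_enum_support (r_supp _)).
- move=> j; have [U least_U U_pi] := least_factor_set_exists (dp_out_factors (g := f (enum_val j))).
  by exists U; split; last exact: sc_Sigma_sub (dp_pi_Sigma (f_dproc _)) U_pi.
Qed.

Lemma point_masses_pproc (R : realType) (S : scenario) (n : nat) (hn : (0 < n)%N)
    (F : model R S -> {ffun 'I_n -> R}) m (r : 'I_m -> R) (G : 'I_m -> sec S -> 'I_n) :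
  (forall (e1 e2 : model R S) (a : R), is_emp e1 -> is_emp e2 -> 0 <= a -> a <= 1 ->
     F (mconv a e1 e2) = [ffun k => a * F e1 k + (1 - a) * F e2 k]) ->
  (forall j, 0 < r j) -> \sum_j r j = 1 ->
  (forall s, global s -> F (delta R s) = [ffun k => \sum_j r j * (G j s == k)%:R]) ->
  (forall j, exists U, least_factor_set (G j) U /\ U \in sc_Sigma S) ->
  exists (m' : nat) (r' : 'I_m' -> R) (f : 'I_m' -> dproc S (scn hn)),
    is_pproc r' f /\ forall e, is_emp e -> F e = emp_to_dist (emp_prob r' f e).
Proof.
move=> F_mconv r_gt0 r_sum1 F_delta /fin_all_exists[U G_U].
pose f j := factor_dproc hn (U j) (G j).
have f_dproc j : is_dproc (f j) by apply: is_dproc_factor_dproc; case: (G_U j).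
exists m, r, f; split=> [|e e_emp]; first by split=> // j; apply: ltW.
have [w [w_global w_sum1 e_comb]] := emp_comb e_emp; rewrite e_comb in e_emp *.
rewrite (F_affine F_mconv) // emp_prob_comb //; apply/ffunP => k; rewrite !ffunE.
apply: eq_bigr => s _; have [gs|/w_global -> ] := boolP (global s); last by rewrite !mul0r.
rewrite F_delta // ffunE; congr (_ * _); apply: eq_bigr => j _.
by rewrite dp_out_factor_dproc //; case: (G_U j) => -[].
Qed.

Theorem mainTheorem7 (R : realType) (S : scenario) (n : nat) (hn : (0 < n)%N)
  (F : model R S -> {ffun 'I_n -> R})
  (hFdist : forall e, is_emp e -> is_dist (F e))
  (hFconv : forall (e1 e2 : model R S) (a : R),
      is_emp e1 -> is_emp e2 -> 0 <= a -> a <= 1 ->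
      F (mconv a e1 e2) = [ffun k => a * F e1 k + (1 - a) * F e2 k]) :
  (exists (m : nat) (r : 'I_m -> R) (f : 'I_m -> dproc S (scn hn)),
      is_pproc r f /\
      forall e, is_emp e -> F e = emp_to_dist (emp_prob r f e))
  <->
  (exists (m : nat) (r : 'I_m -> R) (G : 'I_m -> sec S -> 'I_n),
      [/\ forall j, 0 < r j,
          \sum_j r j = 1,
          forall s, global s ->
            F (delta R s) = [ffun k => \sum_j r j * (G j s == k)%:R] &
          forall j, exists U, least_factor_set (G j) U /\ U \in sc_Sigma S]).
Proof.
split=> [[m [r [f [f_pproc F_f]]]]|[m [r [G [r_gt0 r_sum1 F_delta G_factors]]]]].
  exact: pproc_point_masses f_pproc F_f.
exact: point_masses_pproc hFconv r_gt0 r_sum1 F_delta G_factors.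
Qed.
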